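(* Let $M$ be a nonnegative integer, $k=(k_\alpha)_{\alpha\in R^-}\in\mathbb N^{q-1}$ with $\sum_{\alpha\in R^-}\alpha\cdot k_\alpha=0$ in $R$, and $\Gamma$ a finite index set. Suppose that for each $\alpha\in R^-$ and $i\in\Gamma$ we are given nonnegative integers $x_i^{(\alpha)}$ such that $\sum_{i\in\Gamma}x_i^{(\alpha)}=k_\alpha M$ for all $\alpha\in R^-$ and $\sum_{\alpha\in R^-}x_i^{(\alpha)}\le M$ for all $i\in\Gamma$. Then there exist nonnegative integers $w_a$, $a\in\mathcal C_\Gamma^{(k)}$, such that $\sum_{a\in\mathcal C_\Gamma^{(k)}}w_a=M$ and, for all $\alpha\in R^-$ and $i\in\Gamma$, $x_i^{(\alpha)}=\sum_{a\in\mathcal C_\Gamma^{(k)},\,a_i=\alpha}w_a$.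
   Context: $R$ is a finite ring with $q$ elements, $R^-=R\setminus\{0\}$. For $\alpha\in R$ and $k\in\mathbb N$, $\alpha\cdot k$ denotes the $k$-fold sum $\alpha+\cdots+\alpha$ (equal to $0$ if $k=0$). For a finite index set $\Gamma$, $\mathcal C_\Gamma=\{a=(a_i)_{i\in\Gamma}\in R^\Gamma:\sum_{i\in\Gamma}a_i=0\}$, $\kappa_\Gamma(a)\in\mathbb N^{q-1}$ has coordinates $\kappa_\Gamma(a)_\alpha=|\{i\in\Gamma:a_i=\alpha\}|$ ($\alpha\in R^-$), and $\mathcal C_\Gamma^{(k)}=\{a\in\mathcal C_\Gamma:\kappa_\Gamma(a)=k\}$. *)

From mathcomp Require Import all_boot all_order all_algebra.
Set Implicit Arguments. Unset Strict Implicit. Unset Printing Implicit Defensive.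
Import GRing.Theory.
Local Open Scope ring_scope.

Definition CGamma (R : finPzRingType) (Gamma : finType) : {set {ffun Gamma -> R}} :=
  [set a : {ffun Gamma -> R} | \sum_(i : Gamma) a i == 0].

Definition kappa (R : finPzRingType) (Gamma : finType) (a : {ffun Gamma -> R}) (alpha : R) : nat :=
  #|[set i : Gamma | a i == alpha]|.

(* C_Gamma^(k) for k indexed by R^- (values of k at 0 are irrelevant). *)
Definition CGammak (R : finPzRingType) (Gamma : finType) (k : R -> nat)
  : {set {ffun Gamma -> R}} :=
  [set a in CGamma R Gamma | [forall alpha : R, (alpha != 0) ==> (kappa a alpha == k alpha)]].

From mathcomp Require Import all_boot all_order all_algebra.
From mathcomp Require Import zify.
Import GRing.Theory.
Set Implicit Arguments. Unset Strict Implicit. Unset Printing Implicit Defensive.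

(* Adjoin the value 0 with slack x_i^(0) := M - \sum_alpha x_i^(alpha).  The
   resulting matrix y over R x Gamma has all row sums M and column sums
   cap_c * M, where cap_alpha = k_alpha and cap_0 = |Gamma| - \sum_alpha k_alpha.
   Such a matrix is a sum of M incidence matrices of maps a : Gamma -> R with
   fibres of sizes cap_c: by Hall's theorem with capacities the support of y
   contains such a map, and removing it lowers M by one.  These maps are exactly
   C_Gamma^(k), their coordinate sum being \sum_alpha alpha * k_alpha = 0. *)

Section CapacitatedHall.
Variables (T U : finType) (adj : T -> U -> bool).

Definition nbr (S : {set T}) : {set U} := [set u | [exists i in S, adj i u]].

Definition hall_condition (A : {set T}) (cap : U -> nat) :=
  forall S : {set T}, S \subset A -> #|S| <= \sum_(u in nbr S) cap u.

Definition is_matching (A : {set T}) (cap : U -> nat) (f : T -> U) :=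
  (forall i, i \in A -> adj i (f i)) /\ (forall u, #|[set i in A | f i == u]| <= cap u).

Lemma nbrP (S : {set T}) u : reflect (exists2 i, i \in S & adj i u) (u \in nbr S).
Proof.
rewrite inE; apply: (iffP existsP) => [[i /andP[]]|[i iS aiu]]; first by exists i.
by exists i; rewrite iS.
Qed.

Lemma nbrU (S1 S2 : {set T}) : nbr (S1 :|: S2) = nbr S1 :|: nbr S2.
Proof.
apply/setP => u; rewrite in_setU; apply/nbrP/orP => [[i]|[]/nbrP[i iS aiu]].
- by rewrite inE => /orP[] iS aiu; [left|right]; apply/nbrP; exists i.
- by exists i; rewrite // inE iS.
- by exists i; rewrite // inE iS orbT.
Qed.

Lemma hall_conditionS (A B : {set T}) cap :
  B \subset A -> hall_condition A cap -> hall_condition B cap.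
Proof. by move=> sBA hA S sSB; apply/hA/(subset_trans sSB). Qed.

Lemma matching_set0 cap f : is_matching set0 cap f.
Proof.
split=> [i|u]; first by rewrite inE.
by rewrite (_ : [set _ in _ | _] = set0) ?cards0 //; apply/setP => i; rewrite !inE.
Qed.

Section TightSubset.
Variables (A S0 : {set T}) (cap : U -> nat).
Hypotheses (sS0A : S0 \subset A) (tight : \sum_(u in nbr S0) cap u <= #|S0|).

Let cap_out u := if u \in nbr S0 then 0 else cap u.

Lemma hall_condition_tight_compl :
  hall_condition A cap -> hall_condition (A :\: S0) cap_out.
Proof.
move=> hA S sS.
have sum_out (X : {set U}) : \sum_(u in X) cap_out u = \sum_(u in X :\: nbr S0) cap u.
  rewrite (big_setID (nbr S0)) /= big1 ?add0n => [|u]; last first.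
    by rewrite inE /cap_out => /andP[_ ->].
  by apply: eq_bigr => u; rewrite inE /cap_out => /andP[/negbTE ->].
have dS : [disjoint S & S0].
  apply/pred0P => i /=; apply/negP => /andP[/(subsetP sS)].
  by rewrite inE => /andP[/negbTE ->].
have := hA (S :|: S0); rewrite subUset sS0A (subset_trans sS (subsetDl _ _)) => /(_ isT).
rewrite cardsU (disjoint_setI0 dS) cards0 subn0 nbrU sum_out.
rewrite (big_setID (nbr S0)) /= setIC setKU setDUl setDv setU0; lia.
Qed.

Lemma matching_tight_glue f1 f2 :
  is_matching S0 cap f1 -> is_matching (A :\: S0) cap_out f2 ->
  is_matching A cap (fun i => if i \in S0 then f1 i else f2 i).
Proof.
move=> [f1a f1c] [f2a f2c]; split=> [i iA|u].
  by case: ifP => iS; [apply: f1a | apply: f2a; rewrite inE iS].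
set X := [set i in A | _]; rewrite -(cardsID S0 X).
have -> : X :&: S0 = [set i in S0 | f1 i == u].
  apply/setP => i; rewrite !inE; case: (boolP (i \in S0)) => iS; rewrite ?andbF ?andbT //.
  by rewrite (subsetP sS0A).
have -> : X :\: S0 = [set i in A :\: S0 | f2 i == u].
  by apply/setP => i; rewrite !inE; case: (boolP (i \in S0)); rewrite ?andbF.
have := f1c u; have := f2c u; rewrite /cap_out; case: ifP => uN; first lia.
suff -> : #|[set i in S0 | f1 i == u]| = 0 by lia.
apply/eqP; rewrite cards_eq0; apply/eqP/setP => i; rewrite !inE.
apply/negP => /andP[iS /eqP fi]; move/negbT: uN => /nbrP; apply.
by exists i; rewrite // -fi f1a.
Qed.

End TightSubset.

Section SlackSubsets.
Variables (A : {set T}) (cap : U -> nat) (a : T) (b : U).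
Hypotheses (aA : a \in A) (adj_ab : adj a b) (cap_b : 0 < cap b).

Let cap_dec u := if u == b then (cap u).-1 else cap u.

Lemma hall_condition_slack_remove :
  (forall S : {set T}, S \subset A -> S != set0 -> S != A ->
     \sum_(u in nbr S) cap u > #|S|) ->
  hall_condition (A :\ a) cap_dec.
Proof.
move=> slack S sS; have [->|Sn0] := eqVneq S set0; first by rewrite cards0.
have sSA : S \subset A by apply: subset_trans sS (subD1set _ _).
have SnA : S != A.
  by apply: contraTneq sS => ->; apply/subsetPn; exists a; rewrite // !inE eqxx.
have := slack S sSA Sn0 SnA.
suff : \sum_(u in nbr S) cap u <= \sum_(u in nbr S) cap_dec u + 1 by lia.
have [bN|bN] := boolP (b \in nbr S).
  rewrite (bigD1 b bN) (bigD1 b bN) /= /cap_dec eqxx.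
  rewrite [\sum_(i | _) (if _ then _ else _)](eq_bigr cap); first lia.
  by move=> u /andP[_ /negbTE ->].
rewrite (eq_bigr cap_dec) ?leq_addr // => u uN; rewrite /cap_dec.
by case: eqP => // ub; move: bN; rewrite -ub uN.
Qed.

Lemma matching_extend f : is_matching (A :\ a) cap_dec f ->
  is_matching A cap (fun i => if i == a then b else f i).
Proof.
move=> [fa fc]; split=> [i iA|u].
  by case: eqP => [->//|/eqP ia]; apply: fa; rewrite !inE ia.
have := fc u; rewrite /cap_dec; case: eqP => [->|nub] Hc.
  rewrite (cardsD1 a [set i in A | _]) inE aA eqxx.
  rewrite (_ : _ :\ a = [set i in A :\ a | f i == b]); first lia.
  by apply/setP => i; rewrite !inE; case: eqP.
rewrite (_ : [set i in A | _] = [set i in A :\ a | f i == u]) //.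
apply/setP => i; rewrite !inE; case: (i =P a) => [->|_] //=.
by apply/negbTE/nandP; right; apply/eqP => bu; case: nub.
Qed.

End SlackSubsets.

Theorem capacitated_hall (u0 : U) (A : {set T}) (cap : U -> nat) :
  hall_condition A cap -> exists f, is_matching A cap f.
Proof.
have [n] := ubnP #|A|; elim: n A cap => // n IH A cap ltAn hA.
have [A0|[a aA]] := set_0Vmem A.
  by exists (fun _ => u0); rewrite A0; apply: matching_set0.
(* Either a proper nonempty S0 is tight, and S0 and A :\: S0 are matched
   separately, or every such set has spare capacity and any edge at a can be
   committed to. *)
have [tight|slack] := boolP [exists S0 : {set T}, [&& S0 \subset A, S0 != set0, S0 != A &
    \sum_(u in nbr S0) cap u <= #|S0|]].
  case/existsP: tight => S0 /and4P[sS0A S0n0 S0nA tight].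
  have ltS0A : #|S0| < #|A| by rewrite proper_card // properEneq S0nA.
  have [f1 mf1] := IH S0 cap (leq_trans ltS0A ltAn) (hall_conditionS sS0A hA).
  have ltcompl : #|A :\: S0| < #|A|.
    by rewrite cardsD (setIidPr sS0A); move: S0n0; rewrite -card_gt0; lia.
  have [f2 mf2] :=
    IH _ _ (leq_trans ltcompl ltAn) (hall_condition_tight_compl sS0A tight hA).
  by exists (fun i => if i \in S0 then f1 i else f2 i); apply: matching_tight_glue.
have [b /nbrP[a']] : exists2 b, b \in nbr [set a] & 0 < cap b.
  have := hA [set a]; rewrite sub1set aA cards1 => /(_ isT).
  rewrite ltnNge leqn0 sum_nat_eq0 negb_forall => /existsP[b].
  rewrite negb_imply -lt0n.
  by case/andP; exists b.
rewrite inE => /eqP -> ab capb.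
have all_slack (S : {set T}) :
    S \subset A -> S != set0 -> S != A -> \sum_(u in nbr S) cap u > #|S|.
  move=> sSA Sn0 SnA; rewrite ltnNge; apply: contraNN slack => tight.
  by apply/existsP; exists S; rewrite sSA Sn0 SnA.
have ltAa : #|A :\ a| < #|A| by rewrite (cardsD1 a A) aA.
have [f mf] :=
  IH _ _ (leq_trans ltAa ltAn) (hall_condition_slack_remove aA ab capb all_slack).
by exists (fun i => if i == a then b else f i); apply: matching_extend.
Qed.

End CapacitatedHall.

Lemma sum_nat_of_bool (I : finType) (P : pred I) : \sum_i (P i : nat) = #|[set i | P i]|.
Proof. by rewrite -sum1dep_card [RHS]big_mkcond; apply: eq_bigr => i _; case: (P i). Qed.

Section Assignments.
Variables (T U : finType).

Definition assignments (cap : U -> nat) : {set {ffun T -> U}} :=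
  [set f : {ffun T -> U} | [forall c, #|[set i | f i == c]| == cap c]].

Lemma sum_fibres (V : nmodType) (F : U -> V) (f : T -> U) :
  (\sum_i F (f i) = \sum_c F c *+ #|[set i | f i == c]|)%R.
Proof.
rewrite (partition_big f xpredT) //=; apply: eq_bigr => c _.
rewrite -sumr_const; apply: eq_big => [i|i /eqP-> //]; by rewrite inE.
Qed.

Lemma card_fibres (f : T -> U) : \sum_c #|[set i | f i == c]| = #|T|.
Proof.
rewrite -sum1_card (partition_big f xpredT) //=; apply: eq_bigr => c _.
by rewrite sum1dep_card.
Qed.

Lemma assignment_in_support (u0 : U) (cap : U -> nat) m (y : U -> T -> nat) :
  (forall i, \sum_c y c i = m.+1) -> (forall c, \sum_i y c i = cap c * m.+1) ->
  exists2 f, f \in assignments cap & forall i, 0 < y (f i) i.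
Proof.
move=> row col; pose adj i c := 0 < y c i.
have hall : hall_condition adj [set: T] cap.
  move=> S _; rewrite -(leq_pmul2r (ltn0Sn m)) big_distrl /= -sum_nat_const.
  under eq_bigr => i _ do rewrite -(row i).
  rewrite exchange_big /= (bigID (mem (nbr adj S))) /= [X in _ + X]big1 => [|c cN].
    rewrite addn0; apply: leq_sum => c _; rewrite -col [X in _ <= X](bigID (mem S)) /=.
    exact: leq_addr.
  apply: big1 => i iS; apply/eqP; rewrite -leqn0 leqNgt; apply: contra cN => yci.
  by apply/nbrP; exists i.
have [g [gadj gcap]] := capacitated_hall u0 hall.
have sum_cap : \sum_c cap c = #|T|.
  apply/eqP; rewrite -(eqn_pmul2r (ltn0Sn m)) big_distrl /= -sum_nat_const.
  under eq_bigr => c _ do rewrite -(col c).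
  under [X in _ == X]eq_bigr => i _ do rewrite -(row i).
  by rewrite exchange_big.
have cnt_le c : #|[set i | g i == c]| <= cap c.
  by have := gcap c; congr (_ <= _); apply: eq_card => i; rewrite !inE.
have cnt_eq c : #|[set i | g i == c]| = cap c.
  have := @leqif_sum U xpredT _ _ _ (fun c _ => leqif_eq (cnt_le c)).
  rewrite card_fibres sum_cap => -[_]; rewrite eqxx => /esym/forallP/(_ c).
  by move=> /eqP.
exists [ffun i => g i].
  rewrite inE; apply/forallP => c; rewrite -cnt_eq.
  by apply/eqP/eq_card => i; rewrite !inE ffunE.
by move=> i; rewrite ffunE; apply: gadj; rewrite inE.
Qed.

Lemma assignment_decomposition (u0 : U) (cap : U -> nat) m (y : U -> T -> nat) :
  (forall i, \sum_c y c i = m) -> (forall c, \sum_i y c i = cap c * m) ->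
  exists w : {ffun T -> U} -> nat, \sum_(f in assignments cap) w f = m /\
    forall c i, y c i = \sum_(f in assignments cap | f i == c) w f.
Proof.
elim: m y => [|m IH] y row col.
  exists (fun _ => 0); split=> [|c i]; first by rewrite big1.
  by rewrite big1 //; have /eqP := row i; rewrite sum_nat_eq0 => /forallP/(_ c)/eqP.
have [f fA fpos] := assignment_in_support u0 row col.
pose y' c i := y c i - (f i == c).
have ind_le c i : (f i == c) <= y c i by case: eqP => // <-; apply: fpos.
have [w' [w'sum w'y]] : exists w : {ffun T -> U} -> nat,
    \sum_(g in assignments cap) w g = m /\
    forall c i, y' c i = \sum_(g in assignments cap | g i == c) w g.
  apply: IH => [i|c]; rewrite sumnB => [|j _]; try exact: ind_le.
  - rewrite row sum_nat_of_bool (_ : [set c | f i == c] = [set f i]) ?cards1 ?subn1 //.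
    by apply/setP => c; rewrite !inE eq_sym.
  - rewrite col sum_nat_of_bool; move: fA; rewrite inE => /forallP/(_ c)/eqP ->.
    by rewrite mulnS addKn.
exists (fun g => w' g + (g == f)); split=> [|c i].
  rewrite big_split /= w'sum (bigD1 f fA) /= eqxx big1 ?addn0 ?addn1 //.
  by move=> g /andP[_ /negbTE ->].
rewrite big_split /= -w'y /y'.
have -> : \sum_(g in assignments cap | g i == c) (g == f : nat) = (f i == c).
  case: (f i =P c) => [e|ne].
    rewrite (bigD1 f) /=; last by rewrite fA e eqxx.
    by rewrite eqxx big1 // => g /andP[_ /negbTE ->].
  by rewrite big1 // => g /andP[_ /eqP gi]; case: eqP => // gf; case: ne; rewrite -gi gf.
by rewrite subnK.
Qed.

End Assignments.

Local Open Scope ring_scope.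

Definition pad_capacity (R : finPzRingType) (n : nat) (k : R -> nat) (c : R) : nat :=
  if c == 0 then (n - \sum_(a | a != 0%R) k a)%N else k c.

Lemma CGammak_assignments (R : finPzRingType) (Gamma : finType) (k : R -> nat) :
  \sum_(alpha | alpha != 0) alpha *+ k alpha = 0 ->
  CGammak Gamma k = assignments Gamma (pad_capacity #|Gamma| k).
Proof.
move=> hk; apply/setP => a; rewrite !inE.
apply/andP/forallP => [[_ /forallP kap] c | cnt].
  have kapE d : d != 0 -> #|[set i | a i == d]| = k d.
    by move=> dn; apply/eqP/(implyP (kap d)).
  rewrite /pad_capacity; have [->|cn] := eqVneq c 0; last by rewrite kapE.
  have := card_fibres a; rewrite (bigD1 0) //= (eq_bigr k) => [<-|d /kapE //].
  by rewrite addnK.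
have cntE d : #|[set i | a i == d]| = pad_capacity #|Gamma| k d by apply/eqP.
split.
  apply/eqP; rewrite (sum_fibres id) (bigD1 0) //= mul0rn add0r -[RHS]hk.
  by apply: eq_bigr => c cn; rewrite cntE /pad_capacity (negbTE cn).
by apply/forallP => c; apply/implyP => cn; rewrite /kappa cntE /pad_capacity (negbTE cn).
Qed.

Theorem proposition3 (R : finPzRingType) (Gamma : finType) (M : nat) (k : R -> nat)
  (x : R -> Gamma -> nat)
  (hk : \sum_(alpha : R | alpha != 0) alpha *+ k alpha = 0)
  (hcol : forall alpha : R, alpha != 0 -> (\sum_(i : Gamma) x alpha i = k alpha * M)%N)
  (hrow : forall i : Gamma, (\sum_(alpha : R | alpha != 0%R) x alpha i <= M)%N) :
  exists w : {ffun Gamma -> R} -> nat,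
    (\sum_(a in CGammak Gamma k) w a = M)%N /\
    forall (alpha : R) (i : Gamma), alpha != 0 ->
      x alpha i = (\sum_(a in CGammak Gamma k | a i == alpha :> R) w a)%N.
Proof.
pose y c i := if c == 0 then (M - \sum_(a | a != 0%R) x a i)%N else x c i.
have row i : (\sum_c y c i = M)%N.
  rewrite (bigD1 0) //= /y eqxx (eq_bigr (x^~ i)) => [|c /negbTE -> //].
  by rewrite subnK.
have col c : (\sum_i y c i = pad_capacity #|Gamma| k c * M)%N.
  rewrite /y /pad_capacity; case: eqP => [_|/eqP cn]; last exact: hcol.
  rewrite sumnB // sum_nat_const mulnBl big_distrl exchange_big /=.
  by congr (_ - _)%N; apply: eq_bigr => d dn; rewrite hcol.
have [w [wsum wy]] := assignment_decomposition 0 row col.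
rewrite (CGammak_assignments Gamma hk); exists w; split=> // alpha i an.
by rewrite -wy /y (negbTE an).
Qed.
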